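(* Let $\mathbb{C}$ be an isostable squares category. For every $n\ge0$, the forgetful functor $U_n:S^{\square}_n\mathbb{C}\to\mathcal{H}_n\mathbb{C}$, sending an object $(A_{jk})$ to its top row $O=A_{00}\rightarrowtail A_{01}\rightarrowtail\cdots\rightarrowtail A_{0n}$, is an equivalence of categories.
   Context: A squares category is a flat double category (squares uniquely determined by their boundary; we say a boundary ''is a square'') with a distinguished object $O$ initial in the horizontal category $\mathcal{H}_{\mathbb{C}}$ (morphisms $\rightarrowtail$) and terminal in the vertical category $\mathcal{V}_{\mathbb{C}}$ (morphisms $\twoheadrightarrow$). A vertical $f:A\twoheadrightarrow B$ is a vertical weak equivalence if the boundary (top $O\rightarrowtail A$, left $\mathrm{id}_O$, right $f$, bottom $O\rightarrowtail B$) is a square; a horizontal $g:A\rightarrowtail B$ is a horizontal weak equivalence if the boundary (top $g$, left $A\twoheadrightarrow O$, right $B\twoheadrightarrow O$, bottom $\mathrm{id}_O$) is a square. Vertical natural transformations between double functors of flat double categories: vertical components $\tau_A$ with $(Ff,\tau_A,\tau_{A'},Gf)$ a square for each horizontal $f$ and commuting naturality squares in the vertical category; $\mathrm{Fun}^v$ is the functor category. With $\boxdot$ the flat double category generated by one square (corners $a,b,c,d$, horizontal $a\rightarrowtail b,c\rightarrowtail d$, vertical $a\twoheadrightarrow c,b\twoheadrightarrow d$), $i:\mathrm{span}\hookrightarrow\boxdot$ on $a\rightarrowtail b,a\twoheadrightarrow c$ and $j:\mathrm{cospan}\hookrightarrow\boxdot$ on $b\twoheadrightarrow d,c\rightarrowtail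 d$: a squares category is stable if (i) $i^*$ on $\mathrm{Fun}^v(-,\mathbb{C})$ has a section functor $s$, (ii) there is a natural transformation $w:si^*\Rightarrow\mathrm{id}$ with components the identity at $a,b,c$, (iii) $j^*$ has a section functor $t$, (iv) there is a natural transformation $u:tj^*\Rightarrow\mathrm{id}$ with components the identity at $b,c,d$ and a vertical weak equivalence at $a$. It is isostable if it is stable, its weak equivalences are invertible, and for every boundary with top $f:A\rightarrowtail B$, bottom $k:C\rightarrowtail D$ and vertical isomorphisms $g:A\twoheadrightarrow C$, $h:B\twoheadrightarrow D$, this boundary is a square iff the boundary with top $k$, left $g^{-1}$, right $h^{-1}$, bottom $f$ is a square. $S^{\square}_n\mathbb{C}$: objects are families $(A_{jk})_{0\le j\le k\le n}$ with $A_{jj}=O$, horizontal $A_{jk}\rightarrowtail A_{j,k+1}$, vertical $A_{jk}\twoheadrightarrow A_{j+1,k}$, each unit cell ($j<k<n$) a square; morphisms are families of vertical morphisms $A_{jk}\twoheadrightarrow A'_{jk}$ such that every cell formed with a horizontal generator is a square and every cell formed with a vertical generator commutes in $\mathcal{V}_{\mathbb{C}}$ (their components are vertical weak equivalences). $\mathcal{H}_n\mathbb{C}$ is the category whose objects are sequences $O\rightarrowtail A_1\rightarrowtail\cdots\rightarrowtail A_n$ of horizontal morphisms and whose morphisms are families of vertical weak equivalences $A_i\twoheadrightarrow A'_i$ (identity on $O$) such that each boundary $(A_i\rightarrowtail A_{i+1}, A_i\twoheadrightarrow A_i', A_{i+1}\twoheadrightarrow A'_{i+1}, A'_i\rightarrowtail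 A'_{i+1})$ is a square. *)

From mathcomp Require Import all_boot.
Set Implicit Arguments.
Unset Strict Implicit.
Unset Printing Implicit Defensive.

(* A flat double category: a horizontal category (Hm, idH, compH), a    *)
(* vertical category (Vm, idV, compV), and a predicate sq on boundaries *)
(* (top, left, right, bottom) closed under identity squares and         *)
(* horizontal / vertical pasting.  Composition is written in            *)
(* diagrammatic order: compH f g = "f then g".                         *)
Record SqCat := {
  Obj : Type;
  Hm : Obj -> Obj -> Type;
  idH : forall A, Hm A A;
  compH : forall A B C, Hm A B -> Hm B C -> Hm A C;
  compH_id_l : forall A B (f : Hm A B), compH (idH A) f = f;
  compH_id_r : forall A B (f : Hm A B), compH f (idH B) = f;
  compH_assoc : forall A B C D (f : Hm A B) (g : Hm B C) (h : Hm C D),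
      compH f (compH g h) = compH (compH f g) h;
  Vm : Obj -> Obj -> Type;
  idV : forall A, Vm A A;
  compV : forall A B C, Vm A B -> Vm B C -> Vm A C;
  compV_id_l : forall A B (f : Vm A B), compV (idV A) f = f;
  compV_id_r : forall A B (f : Vm A B), compV f (idV B) = f;
  compV_assoc : forall A B C D (f : Vm A B) (g : Vm B C) (h : Vm C D),
      compV f (compV g h) = compV (compV f g) h;
  sq : forall A B C D, Hm A B -> Vm A C -> Vm B D -> Hm C D -> Prop;
  sq_idH : forall A C (g : Vm A C), sq (idH A) g g (idH C);
  sq_idV : forall A B (f : Hm A B), sq f (idV A) (idV B) f;
  sq_compH : forall A B E C D F (f : Hm A B) (f' : Hm B E) (g : Vm A C)
      (h : Vm B D) (h' : Vm E F) (k : Hm C D) (k' : Hm D F),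
      sq f g h k -> sq f' h h' k' -> sq (compH f f') g h' (compH k k');
  sq_compV : forall A B C D C' D' (f : Hm A B) (g : Vm A C) (h : Vm B D)
      (k : Hm C D) (g' : Vm C C') (h' : Vm D D') (l : Hm C' D'),
      sq f g h k -> sq k g' h' l -> sq f (compV g g') (compV h h') l;
  O : Obj;
  zH : forall A, Hm O A;
  zH_uniq : forall A (f : Hm O A), f = zH A;
  tV : forall A, Vm A O;
  tV_uniq : forall A (f : Vm A O), f = tV A
}.

Arguments idH {s} A.
Arguments compH {s A B C} _ _.
Arguments idV {s} A.
Arguments compV {s A B C} _ _.
Arguments sq {s A B C D} _ _ _ _.
Arguments O {s}.
Arguments zH {s} A.
Arguments tV {s} A.

Section Defs.
Variable C : SqCat.

Definition vWE (A B : Obj C) (f : Vm A B) : Prop :=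
  sq (zH A) (idV O) f (zH B).
Definition hWE (A B : Obj C) (g : Hm A B) : Prop :=
  sq g (tV A) (tV B) (idH O).

(* Double functors out of the generating shapes span, boxdot, cospan. *)
Record Span := mkSpan {
  spA : Obj C; spB : Obj C; spC : Obj C;
  sptop : Hm spA spB; spleft : Vm spA spC }.

Record Box := mkBox {
  bxA : Obj C; bxB : Obj C; bxC : Obj C; bxD : Obj C;
  bxtop : Hm bxA bxB; bxleft : Vm bxA bxC;
  bxright : Vm bxB bxD; bxbot : Hm bxC bxD;
  bxsq : sq bxtop bxleft bxright bxbot }.

Record Cospan := mkCospan {
  coB : Obj C; coC : Obj C; coD : Obj C;
  coright : Vm coB coD; cobot : Hm coC coD }.

(* vertical natural transformations (morphisms of Fun^v), given by their
   components; conditions for the generating morphisms of each shape *)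
Definition spanT (X Y : Span) (ta : Vm (spA X) (spA Y))
    (tb : Vm (spB X) (spB Y)) (tc : Vm (spC X) (spC Y)) : Prop :=
  sq (sptop X) ta tb (sptop Y) /\ compV ta (spleft Y) = compV (spleft X) tc.

Definition boxT (F G : Box) (ta : Vm (bxA F) (bxA G))
    (tb : Vm (bxB F) (bxB G)) (tc : Vm (bxC F) (bxC G))
    (td : Vm (bxD F) (bxD G)) : Prop :=
  [/\ sq (bxtop F) ta tb (bxtop G), sq (bxbot F) tc td (bxbot G),
      compV ta (bxleft G) = compV (bxleft F) tc
    & compV tb (bxright G) = compV (bxright F) td].

Definition cospT (X Y : Cospan) (tb : Vm (coB X) (coB Y))
    (tc : Vm (coC X) (coC Y)) (td : Vm (coD X) (coD Y)) : Prop :=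
  sq (cobot X) tc td (cobot Y) /\ compV tb (coright Y) = compV (coright X) td.

Definition istar (F : Box) : Span := mkSpan (bxtop F) (bxleft F).
Definition jstar (F : Box) : Cospan := mkCospan (bxright F) (bxbot F).

Definition boxOfSpan (X : Span) (D : Obj C) (r : Vm (spB X) D)
    (b : Hm (spC X) D) (p : sq (sptop X) (spleft X) r b) : Box :=
  @mkBox (spA X) (spB X) (spC X) D (sptop X) (spleft X) r b p.

Definition boxOfCospan (Y : Cospan) (A : Obj C) (t : Hm A (coB Y))
    (l : Vm A (coC Y)) (p : sq t l (coright Y) (cobot Y)) : Box :=
  @mkBox A (coB Y) (coC Y) (coD Y) t l (coright Y) (cobot Y) p.

(* A section s of i^* (strictly, i^* s = id) is given by its
   value on objects (the missing corner d with its two morphisms and the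
   square) and on morphisms (the missing component at d), subject to
   naturality and functoriality; similarly for t. *)
Record Stable := {
  sD : Span -> Obj C;
  sR : forall X, Vm (spB X) (sD X);
  sB : forall X, Hm (spC X) (sD X);
  sSq : forall X, sq (sptop X) (spleft X) (sR X) (sB X);
  sM : forall X Y ta tb tc, @spanT X Y ta tb tc -> Vm (sD X) (sD Y);
  sM_nat : forall X Y ta tb tc (p : @spanT X Y ta tb tc),
      @boxT (boxOfSpan (sSq X)) (boxOfSpan (sSq Y)) ta tb tc (sM p);
  sM_id : forall X (p : spanT (idV _) (idV _) (idV _)),
      @sM X X _ _ _ p = idV (sD X);
  sM_comp : forall X Y Z ta tb tc ta' tb' tc'
      (p : @spanT X Y ta tb tc) (p' : @spanT Y Z ta' tb' tc')
      (p'' : spanT (compV ta ta') (compV tb tb') (compV tc tc')),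
      sM p'' = compV (sM p) (sM p');
  (* (ii) natural transformation w : s i^* => id, identity at a, b, c *)
  wD : forall F : Box, Vm (sD (istar F)) (bxD F);
  w_tr : forall F : Box,
      @boxT (boxOfSpan (sSq (istar F))) F (idV _) (idV _) (idV _) (wD F);
  w_nat : forall F G ta tb tc td (p : @boxT F G ta tb tc td)
      (q : @spanT (istar F) (istar G) ta tb tc),
      compV (sM q) (wD G) = compV (wD F) td;
  tA : Cospan -> Obj C;
  tT : forall Y, Hm (tA Y) (coB Y);
  tL : forall Y, Vm (tA Y) (coC Y);
  tSq : forall Y, sq (tT Y) (tL Y) (coright Y) (cobot Y);
  tM : forall X Y tb tc td, @cospT X Y tb tc td -> Vm (tA X) (tA Y);
  tM_nat : forall X Y tb tc td (p : @cospT X Y tb tc td),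
      @boxT (boxOfCospan (tSq X)) (boxOfCospan (tSq Y)) (tM p) tb tc td;
  tM_id : forall Y (p : cospT (idV _) (idV _) (idV _)),
      @tM Y Y _ _ _ p = idV (tA Y);
  tM_comp : forall X Y Z tb tc td tb' tc' td'
      (p : @cospT X Y tb tc td) (p' : @cospT Y Z tb' tc' td')
      (p'' : cospT (compV tb tb') (compV tc tc') (compV td td')),
      tM p'' = compV (tM p) (tM p');
  (* (iv) natural transformation u : t j^* => id, identity at b, c, d and
     a vertical weak equivalence at a *)
  uA : forall F : Box, Vm (tA (jstar F)) (bxA F);
  u_tr : forall F : Box,
      @boxT (boxOfCospan (tSq (jstar F))) F (uA F) (idV _) (idV _) (idV _);
  u_we : forall F : Box, vWE (uA F);
  u_nat : forall F G ta tb tc td (p : @boxT F G ta tb tc td)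
      (q : @cospT (jstar F) (jstar G) tb tc td),
      compV (tM q) (uA G) = compV (uA F) ta
}.

Record Isostable := {
  iso_stable : Stable;
  vWE_inv : forall A B (f : Vm A B), vWE f ->
      exists g : Vm B A, compV f g = idV A /\ compV g f = idV B;
  hWE_inv : forall A B (f : Hm A B), hWE f ->
      exists g : Hm B A, compH f g = idH A /\ compH g f = idH B;
  sq_flip : forall (A B Cc D : Obj C) (f : Hm A B) (k : Hm Cc D)
      (g : Vm A Cc) (g' : Vm Cc A) (h : Vm B D) (h' : Vm D B),
      compV g g' = idV A -> compV g' g = idV Cc ->
      compV h h' = idV B -> compV h' h = idV D ->
      (sq f g h k <-> sq k g' h' f)
}.

(* S^square_n C.  An object is a family A j k (meaningful for          *)
(* 0 <= j <= k <= n) with A j j = O, horizontal maps A j k >-> A j k+1  *)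
(* (j <= k < n), vertical maps A j k ->> A j+1 k (j < k <= n), and each *)
(* unit cell (j < k < n) a square.  Index side conditions are passed    *)
(* as (boolean) proofs.                                                 *)
Record Sobj (n : nat) := {
  SA : nat -> nat -> Obj C;
  Sdiag : forall j, SA j j = O;
  Sh : forall j k, j <= k -> k < n -> Hm (SA j k) (SA j k.+1);
  Sv : forall j k, j < k -> k <= n -> Vm (SA j k) (SA j.+1 k);
  Ssq : forall j k (c : j < k) (b : k < n) (a : j <= k) (d : k <= n)
      (e : j < k.+1),
      sq (Sh a b) (Sv c d) (Sv e b) (Sh c b)
}.

Definition isSmor n (X Y : Sobj n)
    (tau : forall j k, j <= k -> k <= n -> Vm (SA X j k) (SA Y j k)) : Prop :=
  [/\ (forall j k (a : j <= k) (b : k < n) (d : k <= n) (a' : j <= k.+1),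
         sq (Sh X a b) (tau j k a d) (tau j k.+1 a' b) (Sh Y a b)),
      (forall j k (c : j < k) (d : k <= n) (a : j <= k),
         compV (Sv X c d) (tau j.+1 k c d) = compV (tau j k a d) (Sv Y c d))
    & (forall j k (a : j <= k) (d : k <= n), vWE (tau j k a d))].

Record Hobj (n : nat) := {
  HA : nat -> Obj C;
  Hdiag : HA 0 = O;
  Hh : forall i, i < n -> Hm (HA i) (HA i.+1)
}.

Definition isHmor n (X Y : Hobj n)
    (phi : forall i, i <= n -> Vm (HA X i) (HA Y i)) : Prop :=
  (forall i (b : i < n) (d : i <= n), sq (Hh X b) (phi i d) (phi i.+1 b) (Hh Y b))
  /\ (forall i (p : 0 < i) (d : i <= n), vWE (phi i d)).

Definition Uobj n (X : Sobj n) : Hobj n :=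
  {| HA := fun i => SA X 0 i;
     Hdiag := Sdiag X 0;
     Hh := fun i (b : i < n) => Sh X (leq0n i) b |}.

Definition Umor n (X Y : Sobj n)
    (tau : forall j k, j <= k -> k <= n -> Vm (SA X j k) (SA Y j k)) :
    forall i, i <= n -> Vm (HA (Uobj X) i) (HA (Uobj Y) i) :=
  fun i d => tau 0 i (leq0n i) d.

Definition U_faithful n : Prop :=
  forall (X Y : Sobj n) tau tau', @isSmor n X Y tau -> @isSmor n X Y tau' ->
    (forall i d, @Umor n X Y tau i d = @Umor n X Y tau' i d) ->
    forall j k a d, tau j k a d = tau' j k a d.

Definition U_full n : Prop :=
  forall (X Y : Sobj n) phi, @isHmor n (Uobj X) (Uobj Y) phi ->
    exists tau, @isSmor n X Y tau /\ forall i d, @Umor n X Y tau i d = phi i d.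

Definition U_esssurj n : Prop :=
  forall Y : Hobj n, exists (X : Sobj n) phi psi,
    [/\ @isHmor n (Uobj X) Y phi, @isHmor n Y (Uobj X) psi,
        (forall i d, compV (phi i d) (psi i d) = idV _)
      & (forall i d, compV (psi i d) (phi i d) = idV _)].

Definition U_equivalence n : Prop :=
  [/\ U_faithful n, U_full n & U_esssurj n].

End Defs.

From mathcomp Require Import all_boot.
From Stdlib Require Import ClassicalEpsilon.
Set Implicit Arguments.
Unset Strict Implicit.
Unset Printing Implicit Defensive.

(* Everything rests on the section s of i^*: a square is recovered from its span, up
   to the comparison w at its fourth corner.  For essential surjectivity, start from the
   top row O >-> A_1 >-> ... >-> A_n and build each row of the staircase below the
   previous one by applying s to the spans formed by a horizontal map of that row and
   the vertical map just constructed, beginning with O on the diagonal.  For full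
   faithfulness, the component of w at the fourth corner lies in a square whose left
   side is an identity, so it is a vertical weak equivalence and hence invertible: by
   naturality of w the fourth component of a morphism of squares is determined by the
   other three, and conversely conjugating s of a morphism of spans by w yields one,
   whose bottom cell is a square by isostability.  Sweeping the staircase cell by cell,
   row after row, every morphism of top rows therefore extends uniquely. *)

Section Basics.
Variable C : SqCat.

Lemma Vm_into_O_eq (A B : Obj C) : B = O -> forall f g : Vm A B, f = g.
Proof. by move=> -> f g; rewrite (tV_uniq f) (tV_uniq g). Qed.

Lemma vWE_idV (A : Obj C) : vWE (idV A).
Proof. exact: sq_idV. Qed.

Lemma vWE_between_O (A B : Obj C) : A = O -> B = O -> forall f : Vm A B, vWE f.
Proof. by move=> -> -> f; rewrite (Vm_into_O_eq erefl f (idV O)); apply: vWE_idV. Qed.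

Lemma sq_vWE (A B D E : Obj C) (f : Hm A B) (g : Vm A D) (h : Vm B E) (k : Hm D E) :
  sq f g h k -> vWE g -> vWE h.
Proof.
move=> fghk g_we; have := sq_compH g_we fghk.
by rewrite (zH_uniq (compH _ f)) (zH_uniq (compH _ k)).
Qed.

Definition Vm_to_O (A B : Obj C) (E : B = O) : Vm A B :=
  eq_rect_r (Vm A) (tV A) E.

End Basics.

Section FourthCorner.
Variables (C : SqCat) (HC : Isostable C).
Let S := iso_stable HC.

Definition vinv (A B : Obj C) (f : Vm A B) (f_we : vWE f) : Vm B A :=
  proj1_sig (constructive_indefinite_description _ (vWE_inv HC f_we)).

Lemma vinv_r (A B : Obj C) (f : Vm A B) (f_we : vWE f) : compV f (vinv f_we) = idV A.
Proof. by rewrite /vinv; case: constructive_indefinite_description => g []. Qed.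

Lemma vinv_l (A B : Obj C) (f : Vm A B) (f_we : vWE f) : compV (vinv f_we) f = idV B.
Proof. by rewrite /vinv; case: constructive_indefinite_description => g []. Qed.

Lemma vWE_cancel_l (A B D : Obj C) (f : Vm A B) (g g' : Vm B D) :
  vWE f -> compV f g = compV f g' -> g = g'.
Proof.
move=> f_we fg; rewrite -[g]compV_id_l -[g']compV_id_l -(vinv_l f_we).
by rewrite -!compV_assoc fg.
Qed.

Lemma wD_vWE (F : Box C) : vWE (wD S F).
Proof. by case: (w_tr S F) => _ bot _ _; apply: sq_vWE bot (vWE_idV _). Qed.

Lemma boxT_spanT (F G : Box C) (ta : Vm (bxA F) (bxA G)) (tb : Vm (bxB F) (bxB G))
    (tc : Vm (bxC F) (bxC G)) (td : Vm (bxD F) (bxD G)) :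
  boxT ta tb tc td -> @spanT C (istar F) (istar G) ta tb tc.
Proof. by case. Qed.

Lemma boxT_corner_uniq (F G : Box C) (ta : Vm (bxA F) (bxA G))
    (tb : Vm (bxB F) (bxB G)) (tc : Vm (bxC F) (bxC G)) (td td' : Vm (bxD F) (bxD G)) :
  boxT ta tb tc td -> boxT ta tb tc td' -> td = td'.
Proof.
move=> p p'; apply: (vWE_cancel_l (wD_vWE F)).
by rewrite -(w_nat S p (boxT_spanT p)) -(w_nat S p' (boxT_spanT p)).
Qed.

Section Extension.
Variables (F G : Box C) (ta : Vm (bxA F) (bxA G)) (tb : Vm (bxB F) (bxB G))
  (tc : Vm (bxC F) (bxC G)) (q : @spanT C (istar F) (istar G) ta tb tc).

Definition corner_ext : Vm (bxD F) (bxD G) :=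
  compV (vinv (wD_vWE F)) (compV (sM S q) (wD S G)).

Lemma corner_ext_boxT : boxT ta tb tc corner_ext.
Proof.
case: (w_tr S F) => _ botF _ rightF; case: (w_tr S G) => _ botG _ rightG.
case: (sM_nat S q) => top botM left rightM.
rewrite /= compV_id_l in rightF; rewrite /= compV_id_l in rightG; split=> //.
- have botF' := proj1 (sq_flip HC _ _ (compV_id_l _) (compV_id_l _)
    (vinv_r (wD_vWE F)) (vinv_l (wD_vWE F))) botF.
  have := sq_compV (sq_compV botF' botM) botG.
  by rewrite compV_id_l compV_id_r /corner_ext compV_assoc.
- rewrite rightF rightG /corner_ext !compV_assoc.
  by rewrite -(compV_assoc (sR S (istar F))) vinv_r compV_id_r rightM.
Qed.

End Extension.
End FourthCorner.

Section FullyFaithful.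
Variables (C : SqCat) (HC : Isostable C) (n : nat).

Definition cell_box (Z : Sobj C n) j k (c : j < k) (b : k < n) : Box C :=
  mkBox (Ssq Z c b (ltnW c) (ltnW b) (ltnW c)).

Lemma diag_succ_eq (Z : Sobj C n) j k : j < k.+1 -> k <= j -> SA Z j.+1 k.+1 = O.
Proof. by move=> c e; rewrite (@anti_leq k j) ?c ?e ?Sdiag. Qed.

Lemma isSmor_cell (X Y : Sobj C n) tau j k (c : j < k) (b : k < n) (a' : j <= k.+1) :
  @isSmor C n X Y tau ->
  @boxT C (cell_box X c b) (cell_box Y c b)
     (tau j k (ltnW c) (ltnW b)) (tau j k.+1 a' b)
     (tau j.+1 k c (ltnW b)) (tau j.+1 k.+1 (ltnW c) b).
Proof.
case=> hsq vnat _; split=> /=; [exact: hsq | exact: hsq | |]; exact/esym/vnat.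
Qed.

Lemma isSmor_next_row_eq (X Y : Sobj C n) tau tau' j :
  @isSmor C n X Y tau -> @isSmor C n X Y tau' ->
  (forall k a d, tau j k a d = tau' j k a d) -> forall k c d, tau j.+1 k c d = tau' j.+1 k c d.
Proof.
move=> Ht Ht' eq_j; elim=> [//|k IHk] c d.
have [c'|kj] := ltnP j k; last exact: Vm_into_O_eq (diag_succ_eq Y c kj) _ _.
have := isSmor_cell c' d (ltnW c) Ht'; rewrite -!eq_j -IHk (bool_irrelevance c (ltnW c')).
exact/boxT_corner_uniq/isSmor_cell.
Qed.

Lemma isostable_U_faithful : U_faithful C n.
Proof.
move=> X Y tau tau' Ht Ht' eq_top; elim=> [|j IHj] k a d.
  by rewrite (bool_irrelevance a (leq0n k)); apply: eq_top.
exact: isSmor_next_row_eq IHj k a d.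
Qed.

Section Full.
Variables (X Y : Sobj C n).

Definition rowT j := forall k, j <= k -> k <= n -> Vm (SA X j k) (SA Y j k).

Definition row_sq j (r : rowT j) := forall k (a : j <= k) (b : k < n) (d : k <= n)
  (a' : j <= k.+1), sq (Sh X a b) (r k a d) (r k.+1 a' b) (Sh Y a b).

Section NextRow.
Variables (j : nat) (r : rowT j) (r_sq : row_sq r).
Arguments r : clear implicits.

Definition lower_entry k (t : Vm (SA X j.+1 k) (SA Y j.+1 k)) :=
  vWE t /\ forall (c : j < k) (d : k <= n) (a : j <= k),
    compV (Sv X c d) t = compV (r k a d) (Sv Y c d).

Lemma lower_entry_diag k (c : j < k.+1) (e : k <= j) :
  lower_entry (Vm_to_O (SA X j.+1 k.+1) (diag_succ_eq Y c e)).
Proof.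
split; first exact: vWE_between_O (diag_succ_eq X c e) (diag_succ_eq Y c e) _.
by move=> *; apply: Vm_into_O_eq (diag_succ_eq Y c e) _ _.
Qed.

Definition cell_spanT k (c : j < k) (b : k < n) t (t_low : lower_entry t) :
  @spanT C (istar (cell_box X c b)) (istar (cell_box Y c b))
     (r k (ltnW c) (ltnW b)) (r k.+1 (leqW (ltnW c)) b) t :=
  conj (r_sq (ltnW c) b (ltnW b) (leqW (ltnW c)))
       (esym (t_low.2 c (ltnW b) (ltnW c))).

Lemma lower_entry_corner_ext k (c : j < k) (b : k < n) t (t_low : lower_entry t) :
  lower_entry (corner_ext HC (cell_spanT c b t_low)).
Proof.
have [_ bot _ right] := corner_ext_boxT HC (cell_spanT c b t_low).
split=> [|c' d a]; first exact: sq_vWE bot t_low.1.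
by rewrite (bool_irrelevance c' (ltnW c)) (bool_irrelevance d b)
  (bool_irrelevance a (leqW (ltnW c))) right.
Qed.

Fixpoint next_row_at k : j < k -> k <= n -> {t | lower_entry t} :=
  match k with
  | 0 => fun c _ => False_rect _ (notF c)
  | k'.+1 => fun c d =>
    match ltnP j k' with
    | LtnNotGeq c' => let t := next_row_at c' (ltnW d) in
        exist _ _ (lower_entry_corner_ext c' d (proj2_sig t))
    | GeqNotLtn e => exist _ _ (lower_entry_diag c e)
    end
  end.

Definition next_row : rowT j.+1 := fun k c d => sval (next_row_at c d).

Lemma next_row_cell k (c : j < k) (b : k < n) (c' : j < k.+1) :
  @boxT C (cell_box X c b) (cell_box Y c b)
     (r k (ltnW c) (ltnW b)) (r k.+1 (leqW (ltnW c)) b) (next_row c (ltnW b)) (next_row c' b).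
Proof.
rewrite /next_row /=; case: ltnP => [c''|kj]; last by exfalso; rewrite ltnNge kj in c.
by rewrite (bool_irrelevance c'' c); apply: corner_ext_boxT.
Qed.

Lemma next_row_sq : row_sq next_row.
Proof.
move=> k c b d c'; rewrite (bool_irrelevance d (ltnW b)).
by have [_ bot _ _] := next_row_cell c b c'.
Qed.

Lemma next_row_vWE k (c : j < k) (d : k <= n) : vWE (next_row c d).
Proof. exact: (proj2_sig (next_row_at c d)).1. Qed.

Lemma next_row_compat k (c : j < k) (d : k <= n) (a : j <= k) :
  compV (Sv X c d) (next_row c d) = compV (r k a d) (Sv Y c d).
Proof. exact: (proj2_sig (next_row_at c d)).2. Qed.

End NextRow.

Variables (phi : forall i, i <= n -> Vm (HA (Uobj X) i) (HA (Uobj Y) i))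
  (phi_mor : isHmor phi).
Arguments phi : clear implicits.

Definition top_row : rowT 0 := fun k _ d => phi k d.

Lemma top_row_sq : row_sq top_row.
Proof. by move=> k a b d a'; rewrite (bool_irrelevance a (leq0n k)); apply: phi_mor.1. Qed.

Fixpoint rows j : {r : rowT j | row_sq r} :=
  if j is j'.+1 then exist _ _ (next_row_sq (proj2_sig (rows j')))
  else exist _ _ top_row_sq.

Definition lift_mor j : rowT j := sval (rows j).

Lemma lift_mor_isSmor : isSmor lift_mor.
Proof.
split=> [j|j k c d a|[|j] k a d]; first exact: (proj2_sig (rows j)).
- exact: next_row_compat.
- case: k a d => [|k] a d; first exact: vWE_between_O (Sdiag X 0) (Sdiag Y 0) _.
  exact: phi_mor.2.
- exact: next_row_vWE.
Qed.

End Full.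

Lemma isostable_U_full : U_full C n.
Proof.
by move=> X Y phi phi_mor; exists (lift_mor phi_mor); split=> //; apply: lift_mor_isSmor.
Qed.

End FullyFaithful.

Section EssentialSurjectivity.
Variables (C : SqCat) (S : Stable C).

Record hseq := HSeq {
  hs_obj : nat -> Obj C;
  hs_h : forall i, Hm (hs_obj i) (hs_obj i.+1) }.

Fixpoint below_seq (R : hseq) i : {Z : Obj C & Vm (hs_obj R i.+1) Z} :=
  if i is i'.+1 then existT _ _ (sR S (mkSpan (hs_h R i'.+1) (projT2 (below_seq R i'))))
  else existT _ O (tV _).

Definition down (R : hseq) i : Vm (hs_obj R i.+1) (projT1 (below_seq R i)) :=
  projT2 (below_seq R i).

Definition next_hseq (R : hseq) : hseq :=
  @HSeq (fun i => projT1 (below_seq R i))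
        (fun i => sB S (mkSpan (hs_h R i.+1) (down R i))).

Lemma next_hseq_sq (R : hseq) i :
  sq (hs_h R i.+1) (down R i) (down R i.+1) (hs_h (next_hseq R) i).
Proof. exact: (sSq S (mkSpan (hs_h R i.+1) (down R i))). Qed.

Definition hs_hcast (R : hseq) m m' (E : m' = m.+1) : Hm (hs_obj R m) (hs_obj R m') :=
  eq_rect_r (fun x => Hm (hs_obj R m) (hs_obj R x)) (hs_h R m) E.

Definition down_cast (R : hseq) m m' (E : m = m'.+1) :
    Vm (hs_obj R m) (hs_obj (next_hseq R) m') :=
  eq_rect_r (fun x => Vm (hs_obj R x) (hs_obj (next_hseq R) m')) (down R m') E.

Lemma next_hseq_sq_cast (R : hseq) m1 m2 m3 m4 (E1 : m2 = m1.+1) (E2 : m1 = m3.+1)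
    (E3 : m2 = m4.+1) (E4 : m4 = m3.+1) :
  sq (hs_hcast R E1) (down_cast R E2) (down_cast R E3) (hs_hcast (next_hseq R) E4).
Proof. by subst m2 m1 m4; rewrite (eq_irrelevance E3 erefl); apply: next_hseq_sq. Qed.

Section Staircase.
Variables (n : nat) (Y : Hobj C n).

Definition castY m m' (E : m = m') : Vm (HA Y m) (HA Y m') :=
  eq_rect m (fun x => Vm (HA Y m) (HA Y x)) (idV _) m' E.

Definition castHY m m' p p' (E : m = p) (E' : m' = p') (f : Hm (HA Y p) (HA Y p')) :
    Hm (HA Y m) (HA Y m') :=
  eq_rect_r (fun x => Hm (HA Y x) (HA Y m'))
    (eq_rect_r (fun y => Hm (HA Y p) (HA Y y)) f E') E.

Lemma castY_vWE m m' (E : m = m') : vWE (castY E).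
Proof. by subst m'; apply: vWE_idV. Qed.

Lemma castYK m m' (E : m = m') : compV (castY E) (castY (esym E)) = idV _.
Proof. by subst m'; apply: compV_id_l. Qed.

Lemma castY_esymK m m' (E : m = m') : compV (castY (esym E)) (castY E) = idV _.
Proof. by subst m'; apply: compV_id_l. Qed.

Lemma castHY_sq m m' p p' (E : m = p) (E' : m' = p') f :
  sq (castHY E E' f) (castY E) (castY E') f.
Proof. by subst p p'; apply: sq_idV. Qed.

Lemma castHY_sq_inv m m' p p' (E : m = p) (E' : m' = p') f :
  sq f (castY (esym E)) (castY (esym E')) (castHY E E' f).
Proof. by subst p p'; apply: sq_idV. Qed.

(* Beyond [n] the sequence [Y] is continued by identities, so that every row of the
   staircase is an infinite sequence. *)
Definition top_h i : Hm (HA Y (minn i n)) (HA Y (minn i.+1 n)) :=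
  match ltnP i n with
  | LtnNotGeq b => castHY (minn_idPl (ltnW b)) (minn_idPl b) (Hh Y b)
  | GeqNotLtn e => castHY (minn_idPr e) (minn_idPr (leqW e)) (idH _)
  end.

Lemma top_h_lt i (b : i < n) : exists E E', top_h i = castHY E E' (Hh Y b).
Proof.
(* [case: ltnP] would also abstract the [minn i n] index of [ltnP i n] in the goal. *)
rewrite /top_h; destruct (ltnP i n) as [b'|e]; last by exfalso; rewrite ltnNge e in b.
by rewrite (bool_irrelevance b' b); do 2 eexists.
Qed.

Fixpoint stair j : hseq :=
  if j is j'.+1 then next_hseq (stair j') else HSeq top_h.

Lemma stair_diag j : hs_obj (stair j) 0 = O.
Proof. by case: j => //=; rewrite min0n Hdiag. Qed.

(* Row [j] is stored shifted left by [j], so that every row starts with [O]. *)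
Definition stair_obj : Sobj C n := {|
  SA := fun j k => hs_obj (stair j) (k - j);
  Sdiag := fun j => etrans (congr1 _ (subnn j)) (stair_diag j);
  Sh := fun j k a _ => hs_hcast (stair j) (subSn a);
  Sv := fun j k c _ => down_cast (stair j) (esym (subnSK c));
  Ssq := fun j k c b a d e => next_hseq_sq_cast _ _ _ _ _ |}.

Lemma top_row_cast i (b : i < n) m m' (E : m' = m.+1) (Em : minn m n = i)
    (Em' : minn m' n = i.+1) :
  m = i -> hs_hcast (HSeq top_h) E = castHY Em Em' (Hh Y b).
Proof.
move=> mi; subst m' m; rewrite /hs_hcast /=; have [E1 [E2 ->]] := top_h_lt b.
by rewrite (eq_irrelevance Em E1) (eq_irrelevance Em' E2).
Qed.

Lemma minn_sub0 i : i <= n -> minn (i - 0) n = i.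
Proof. by rewrite subn0 => /minn_idPl. Qed.

Definition from_stair i (d : i <= n) : Vm (HA (Uobj stair_obj) i) (HA Y i) :=
  castY (minn_sub0 d).

Definition to_stair i (d : i <= n) : Vm (HA Y i) (HA (Uobj stair_obj) i) :=
  castY (esym (minn_sub0 d)).

Lemma from_stair_isHmor : isHmor from_stair.
Proof.
split=> [i b d|i _ d]; last exact: castY_vWE.
by rewrite /= (top_row_cast b _ (minn_sub0 d) (minn_sub0 b) (subn0 i)); apply: castHY_sq.
Qed.

Lemma to_stair_isHmor : isHmor to_stair.
Proof.
split=> [i b d|i _ d]; last exact: castY_vWE.
by rewrite /= (top_row_cast b _ (minn_sub0 d) (minn_sub0 b) (subn0 i)); apply: castHY_sq_inv.
Qed.

End Staircase.

Lemma stable_U_esssurj n : U_esssurj C n.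
Proof.
move=> Y; exists (stair_obj Y), (from_stair Y), (to_stair Y).
split; [exact: from_stair_isHmor | exact: to_stair_isHmor | |] => i d.
  exact: castYK (minn_sub0 d).
exact: castY_esymK (minn_sub0 d).
Qed.

End EssentialSurjectivity.

Theorem lemma3p25 (C : SqCat) (HC : Isostable C) (n : nat) :
  U_equivalence C n.
Proof.
split; [exact: isostable_U_faithful | exact: isostable_U_full |].
exact: stable_U_esssurj (iso_stable HC) n.
Qed.
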